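(* Let $b$ be a positive integer, $n$ a positive integer coprime with $b$, and $k\in\mathbb N$. Then the Frobenius homomorphism $F_b:\mathbb Z[1/b][q]/(\Phi_n(q)^k)\to\mathbb Z[1/b][q]/(\Phi_n(q)^k)$ defined by $F_b(q)=q^b$ is a (well-defined) isomorphism of algebras.
   Context: $\Phi_n(q)$ denotes the $n$th cyclotomic polynomial. *)

From HB Require Import structures.
From mathcomp Require Import all_boot all_order all_algebra all_field.
Set Implicit Arguments. Unset Strict Implicit. Unset Printing Implicit Defensive.
Import Order.TTheory GRing.Theory Num.Theory.
Local Open Scope ring_scope.

(* Z[1/b] realised as the subring of Q of fractions z / b^m. *)
Definition Zinvb (b : nat) (x : rat) : Prop :=
  exists (z : int) (m : nat), x = z%:~R / (b ^ m)%:R.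

(* Z[1/b][q], realised inside Q[q]: polynomials with all coefficients in Z[1/b]. *)
Definition polyZinvb (b : nat) (p : {poly rat}) : Prop :=
  forall i : nat, Zinvb b p`_i.

Definition PhiQ (n : nat) : {poly rat} := map_poly intr 'Phi_n.

Definition in_cyc_ideal (b n k : nat) (p : {poly rat}) : Prop :=
  exists r : {poly rat}, polyZinvb b r /\ p = PhiQ n ^+ k * r.

Definition frob (b : nat) (p : {poly rat}) : {poly rat} := p \Po 'X^b.

From HB Require Import structures.
From mathcomp Require Import all_boot all_order all_algebra all_field.
From mathcomp Require Import cyclic ring.
From Stdlib Require Import ClassicalEpsilon.
Set Implicit Arguments. Unset Strict Implicit. Unset Printing Implicit Defensive.
Import GRing.Theory Num.Theory.
Local Open Scope ring_scope.

(* Let A = q^n - 1 and fix c with b c = 1 (mod n).  Modulo A everything is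
   explicit: q^i = q^j whenever i = j (mod n), so F_c o F_b = F_(bc) is the
   identity modulo A; moreover A(q^b) = A * G with G = 1 + q^n + ... + q^(n(b-1))
   congruent to b modulo A, and b is a unit of Z[1/b].  From this we obtain
   - F_b is injective modulo every power A^k (one factor A at a time), and
   - F_b is surjective modulo A^k: a Hensel-type lifting yields r with
     r(q^b) = q mod A^k; then also r^b = q mod A^k and r = q^c mod A.
   Since Phi_n divides A and Phi_n(q) divides Phi_n(q^j) for j coprime to n
   (primitive roots of unity are permuted), Phi_n | Phi_n(r); hence F_b
   preserves (Phi_n^k) and p |-> p(r) is its inverse modulo Phi_n^k. *)

Section DivisibilityOver.
Variables (R : idomainType) (S : subringClosed R).
Implicit Types (D p q u v t : {poly R}) (k : nat).
Local Notation P := (polyOver S).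

Definition dvd_over D p := exists2 t, t \in P & p = D * t.

Lemma dvdo0 D : dvd_over D 0.
Proof. by exists 0; rewrite ?polyOver0 ?mulr0. Qed.

Lemma dvdoo D : dvd_over D D.
Proof. by exists 1; rewrite ?rpred1 ?mulr1. Qed.

Lemma dvd1o p : p \in P -> dvd_over 1 p.
Proof. by exists p; rewrite ?mul1r. Qed.

Lemma dvdoD D p q : dvd_over D p -> dvd_over D q -> dvd_over D (p + q).
Proof. by move=> [t Pt ->] [s Ps ->]; exists (t + s); rewrite ?rpredD ?mulrDr. Qed.

Lemma dvdoN D p : dvd_over D p -> dvd_over D (- p).
Proof. by move=> [t Pt ->]; exists (- t); rewrite ?rpredN ?mulrN. Qed.

Lemma dvdoB D p q : dvd_over D p -> dvd_over D q -> dvd_over D (p - q).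
Proof. by move=> Dp Dq; apply: dvdoD => //; apply: dvdoN. Qed.

Lemma dvdoMr D p t : dvd_over D p -> t \in P -> dvd_over D (p * t).
Proof. by move=> [s Ps ->] Pt; exists (s * t); rewrite ?rpredM ?mulrA. Qed.

Lemma dvdoMl D p t : dvd_over D p -> t \in P -> dvd_over D (t * p).
Proof. by rewrite mulrC; apply: dvdoMr. Qed.

Lemma dvdoZ D p (a : R) : dvd_over D p -> a \in S -> dvd_over D (a *: p).
Proof. by move=> Dp Sa; rewrite -mul_polyC; apply: dvdoMl; rewrite ?polyOverC. Qed.

Lemma dvdo_trans D1 D2 p : dvd_over D1 D2 -> dvd_over D2 p -> dvd_over D1 p.
Proof. by move=> [s Ps ->] [t Pt ->]; exists (s * t); rewrite ?rpredM ?mulrA. Qed.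

Lemma dvdoM D1 D2 p q : dvd_over D1 p -> dvd_over D2 q -> dvd_over (D1 * D2) (p * q).
Proof. by move=> [s Ps ->] [t Pt ->]; exists (s * t); rewrite ?rpredM // mulrACA. Qed.

Lemma dvdoX D p k : dvd_over D p -> dvd_over (D ^+ k) (p ^+ k).
Proof.
move=> Dp; elim: k => [|k IHk]; first by rewrite !expr0; apply: dvdoo.
by rewrite !exprS; apply: dvdoM.
Qed.

Lemma dvdo_exp2l D i j : D \in P -> (i <= j)%N -> dvd_over (D ^+ i) (D ^+ j).
Proof. by move=> PD le_ij; exists (D ^+ (j - i)); rewrite ?rpredX // -exprD subnKC. Qed.

Lemma dvdo_sum D (I : Type) (r : seq I) (F : I -> {poly R}) :
  (forall i, dvd_over D (F i)) -> dvd_over D (\sum_(i <- r) F i).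
Proof.
move=> DF; elim: r => [|i r IHr]; first by rewrite big_nil; apply: dvdo0.
by rewrite big_cons; apply: dvdoD.
Qed.

Lemma dvdo_comp D p u : dvd_over D p -> u \in P -> dvd_over (D \Po u) (p \Po u).
Proof.
move=> [t Pt ->] Pu; exists (t \Po u); first exact: polyOver_comp.
by rewrite comp_polyM.
Qed.

Lemma dvdo_subXX u v k : u \in P -> v \in P -> dvd_over (u - v) (u ^+ k - v ^+ k).
Proof.
move=> Pu Pv; rewrite subrXX; exists (\sum_(i < k) u ^+ (k.-1 - i) * v ^+ i) => //.
by apply: rpred_sum => i _; rewrite rpredM ?rpredX.
Qed.

Lemma dvdo_compB q u v : q \in P -> u \in P -> v \in P ->
  dvd_over (u - v) ((q \Po u) - (q \Po v)).
Proof.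
move=> Pq Pu Pv; rewrite [q \Po u]comp_polyE [q \Po v]comp_polyE -sumrB.
apply: dvdo_sum => i; rewrite -scalerBr; apply: dvdoZ; first exact: dvdo_subXX.
exact: (polyOverP Pq).
Qed.

Lemma dvdo_cancel D p j : D != 0 -> dvd_over (D ^+ j.+1) (D ^+ j * p) -> dvd_over D p.
Proof.
move=> nzD [t Pt Dp]; exists t => //.
apply: (@mulfI _ (D ^+ j)); first by rewrite expf_neq0.
by rewrite Dp exprS mulrCA mulrA.
Qed.

End DivisibilityOver.

Section FrobeniusModuloXnSub1.
Variables (R : idomainType) (S : subringClosed R) (b n c : nat).
Hypotheses (n_gt0 : (0 < n)%N) (bc1 : (b * c = 1 %[mod n])%N).
Hypotheses (b_unit : (b%:R : R) \is a GRing.unit) (binv_S : (b%:R : R)^-1 \in S).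
Implicit Types (p q r u v w : {poly R}) (i j k : nat).
Local Notation P := (polyOver S).
Local Notation dvdo := (dvd_over S).

Let A : {poly R} := 'X^n - 1.
(* A(q^b) = A(q) * G(q), and G = b modulo A. *)
Let G : {poly R} := \sum_(i < b) 'X^n ^+ i.

Lemma A_over : A \in P.
Proof. by rewrite rpredB ?polyOverXn ?rpred1. Qed.

Lemma A_neq0 : A != 0.
Proof. by rewrite monic_neq0 ?monic_Xn_sub_1. Qed.

Lemma dvdoA_Xn i j : (i = j %[mod n])%N -> dvdo A ('X^i - 'X^j).
Proof.
have dvdA_mod m : dvdo A ('X^m - 'X^(m %% n)).
  rewrite {1}(divn_eq m n) exprD mulnC exprM -[X in _ - X]mul1r -mulrBl.
  apply: dvdoMr; last exact: polyOverXn.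
  by rewrite -(expr1n _ (m %/ n)); apply: dvdo_subXX; rewrite ?polyOverXn ?rpred1.
move=> eq_ij; have -> : 'X^i - 'X^j = ('X^i - 'X^(i %% n)) - ('X^j - 'X^(j %% n)) :> {poly R}.
  by rewrite eq_ij opprB addrA subrK.
exact: dvdoB.
Qed.

Lemma dvdoA_comp j : dvdo A (A \Po 'X^j).
Proof.
rewrite /A comp_polyB comp_polyC polyC1 comp_Xn_poly -exprM -(expr0 'X).
by apply: dvdoA_Xn; rewrite modnMl mod0n.
Qed.

Lemma A_comp_Xb : A \Po 'X^b = A * G.
Proof. by rewrite /A comp_polyB comp_polyC polyC1 comp_Xn_poly -exprM mulnC exprM subrX1. Qed.

Lemma G_over : G \in P.
Proof. by apply: rpred_sum => i _; rewrite rpredX ?polyOverXn. Qed.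

Lemma dvdoA_G : dvdo A (G - b%:R).
Proof.
rewrite -[b in b%:R]card_ord -sumr_const -sumrB; apply: dvdo_sum => i.
by rewrite -(expr1n _ i); apply: dvdo_subXX; rewrite ?polyOverXn ?rpred1.
Qed.

Lemma dvdoA_GX j : dvdo A (G ^+ j - b%:R ^+ j).
Proof.
apply: dvdo_trans dvdoA_G _; apply: dvdo_subXX; first exact: G_over.
by rewrite rpred_nat.
Qed.

Lemma scale_binvXK j p : (b%:R^-1) ^+ j *: (b%:R ^+ j * p) = p.
Proof.
by rewrite scalerAl -polyC_natr -rmorphXn /= scale_polyC -exprMn mulVr // expr1n mul1r.
Qed.

Lemma dvdoA_frob_bc q : q \in P -> dvdo A ((q \Po 'X^(b * c)) - q).
Proof.
move=> Pq; apply: (@dvdo_trans _ _ _ ('X^(b * c) - 'X)).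
  by rewrite -{2}(expr1 'X); apply: dvdoA_Xn; rewrite bc1.
by rewrite -{2}(comp_polyXr q); apply: dvdo_compB; rewrite ?polyOverXn ?polyOverX.
Qed.

Lemma comp_XnA q i j : (q \Po 'X^i) \Po 'X^j = q \Po 'X^(j * i).
Proof. by rewrite -comp_polyA comp_Xn_poly -exprM. Qed.

Lemma frob_inj_modA v : v \in P -> dvdo A (v \Po 'X^b) -> dvdo A v.
Proof.
move=> Pv Av; have Avbc : dvdo A (v \Po 'X^(b * c)).
  rewrite mulnC -comp_XnA; apply: dvdo_trans (dvdoA_comp c) _.
  by apply: dvdo_comp; rewrite ?polyOverXn.
by rewrite -[v](subKr (v \Po 'X^(b * c))); apply: dvdoB => //; apply: dvdoA_frob_bc.
Qed.

(* Writing w = A^j v, the hypothesis gives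
   A | G^j v(q^b), hence A | b^j v(q^b), hence A | v(q^b), hence A | v. *)
Lemma frob_lift_modA w j : dvdo (A ^+ j) w -> dvdo (A ^+ j.+1) (w \Po 'X^b) ->
  dvdo (A ^+ j.+1) w.
Proof.
move=> [v Pv ->] Awb; have Pvb : v \Po 'X^b \in P by rewrite polyOver_comp ?polyOverXn.
rewrite comp_polyM rmorphXn /= A_comp_Xb exprMn -mulrA in Awb.
have AGv := dvdo_cancel A_neq0 Awb.
have ABv : dvdo A (b%:R ^+ j * (v \Po 'X^b)).
  rewrite -[_ * _](subKr (G ^+ j * (v \Po 'X^b))) -mulrBl.
  by apply: dvdoB => //; apply: dvdoMr => //; apply: dvdoA_GX.
have Avb : dvdo A (v \Po 'X^b).
  by rewrite -(scale_binvXK j (v \Po 'X^b)); apply: dvdoZ; rewrite ?rpredX.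
have [t Pt ->] := frob_inj_modA Pv Avb.
by exists t; rewrite ?exprSr ?mulrA.
Qed.

Lemma frob_inj_modApow k w : w \in P -> dvdo (A ^+ k) (w \Po 'X^b) -> dvdo (A ^+ k) w.
Proof.
move=> Pw Awb; suff Aw j : (j <= k)%N -> dvdo (A ^+ j) w by apply: Aw.
elim: j => [|j IHj] le_jk; first by rewrite expr0; apply: dvd1o.
apply: frob_lift_modA; first exact: IHj (ltnW le_jk).
by apply: dvdo_trans Awb; apply: dvdo_exp2l; rewrite ?A_over.
Qed.

(* F_b is surjective modulo every power of A: q has a preimage r. This is a
   Hensel-type lifting: if r(q^b) - q = A^k h, the correction
   r - b^-k A^k h(q^c) kills the error modulo A^(k+1). *)
Lemma frob_inverse_modApow k : exists2 r, r \in P & dvdo (A ^+ k) ((r \Po 'X^b) - 'X).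
Proof.
elim: k => [|k [r Pr [h Ph Erh]]].
  exists 'X; first exact: polyOverX.
  by rewrite expr0; apply: dvd1o; rewrite comp_polyX rpredB ?polyOverX ?polyOverXn.
pose binvk := (b%:R : R)^-1 ^+ k.
have Pbinvk : binvk \in S by rewrite rpredX.
have Phc : h \Po 'X^c \in P by rewrite polyOver_comp ?polyOverXn.
exists (r - binvk *: (A ^+ k * (h \Po 'X^c))).
  by rewrite rpredB ?polyOverZ ?rpredM ?rpredX ?A_over.
pose hbc := h \Po 'X^(b * c).
have -> : (r - binvk *: (A ^+ k * (h \Po 'X^c))) \Po 'X^b - 'X
    = A ^+ k * (- (hbc - h) - binvk *: ((G ^+ k - b%:R ^+ k) * hbc)).
  rewrite comp_polyB comp_polyZ comp_polyM rmorphXn /= A_comp_Xb comp_XnA -/hbc.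
  rewrite addrAC Erh exprMn -mulrA scalerAr -mulrBr; congr (_ * _).
  by rewrite mulrBl scalerBr scale_binvXK !opprB addrA subrK.
rewrite exprSr; apply: dvdoM; first exact: dvdoo.
apply: dvdoB; first by apply: dvdoN; apply: dvdoA_frob_bc.
apply: dvdoZ => //; apply: dvdoMr; first exact: dvdoA_GX.
by rewrite polyOver_comp ?polyOverXn.
Qed.

Lemma frob_inverse_pow k r : r \in P -> dvdo (A ^+ k) ((r \Po 'X^b) - 'X) ->
  dvdo (A ^+ k) (r ^+ b - 'X).
Proof.
move=> Pr Ar; apply: frob_inj_modApow; first by rewrite rpredB ?rpredX ?polyOverX.
rewrite comp_polyB rmorphXn /= comp_polyX; apply: dvdo_trans Ar _.
by apply: dvdo_subXX; rewrite ?polyOver_comp ?polyOverXn ?polyOverX.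
Qed.

Lemma frob_inverse_modA r : r \in P -> dvdo A ((r \Po 'X^b) - 'X) -> dvdo A (r - 'X^c).
Proof.
move=> Pr Ar; rewrite -(subrKA (r \Po 'X^(b * c))); apply: dvdoD.
  by rewrite -opprB; apply: dvdoN; apply: dvdoA_frob_bc.
have -> : r \Po 'X^(b * c) - 'X^c = ((r \Po 'X^b) - 'X) \Po 'X^c.
  by rewrite comp_polyB comp_polyX comp_XnA mulnC.
by apply: dvdo_trans (dvdoA_comp c) _; apply: dvdo_comp; rewrite ?polyOverXn.
Qed.
End FrobeniusModuloXnSub1.

(* Phi_n(q) divides Phi_n(q^j) in Z[q] when j is coprime to n: the j-th power
   of a primitive n-th root of unity z is again primitive, so z is a root of
   Phi_n(q^j), and Phi_n is the minimal polynomial of z. *)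
Lemma Cyclotomic_dvd_comp n j : (0 < n)%N -> coprime j n -> 'Phi_n %| 'Phi_n \Po 'X^j.
Proof.
move=> n_gt0 cop_jn; have [z prim_z] := C_prim_root_exists n_gt0.
have [p [min_z _] dvd_min] := minCpolyP z.
have Phi_p : map_poly intr 'Phi_n = p.
  apply: (map_inj_poly (fmorph_inj (ratr : {rmorphism rat -> algC}))); first exact: rmorph0.
  rewrite -min_z (minCpoly_cyclotomic prim_z) -(Cintr_Cyclotomic prim_z) -map_poly_comp.
  by apply: eq_map_poly => x /=; rewrite ratr_int.
rewrite -dvdp_rat_int map_comp_poly map_polyXn Phi_p -dvd_min.
rewrite map_comp_poly map_polyXn -min_z (minCpoly_cyclotomic prim_z).
apply/rootP; rewrite horner_comp hornerXn; apply/rootP.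
by rewrite (root_cyclotomic prim_z) prim_root_exp_coprime.
Qed.

Section FrobeniusModuloCyclotomic.
Variables (R : idomainType) (S : subringClosed R) (b n c : nat).
Hypotheses (n_gt0 : (0 < n)%N) (bc1 : (b * c = 1 %[mod n])%N).
Hypotheses (b_unit : (b%:R : R) \is a GRing.unit) (binv_S : (b%:R : R)^-1 \in S).
Implicit Types (p r : {poly R}) (j k : nat).
Local Notation P := (polyOver S).
Local Notation dvdo := (dvd_over S).

Let Phi : {poly R} := map_poly intr 'Phi_n.

Lemma intpoly_over (p : {poly int}) : map_poly intr p \in P.
Proof. by apply/polyOverP => i; rewrite coef_map rpred_int. Qed.

(* Phi_n is one of the factors of q^n - 1 = prod_(d | n) Phi_d. *)
Lemma Phi_dvdo_Xn_sub1 : dvdo Phi ('X^n - 1).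
Proof.
have -> : 'X^n - 1 = map_poly intr ('X^n - 1 : {poly int}) :> {poly R}.
  by rewrite rmorphB /= map_polyXn rmorph1.
rewrite -(prod_Cyclotomic n_gt0).
rewrite (big_rem n) ?divisors_id //= rmorphM.
by exists (map_poly intr (\prod_(d <- rem n (divisors n)) 'Phi_d)); rewrite ?intpoly_over.
Qed.

Lemma Phi_dvdo_comp j : coprime j n -> dvdo Phi (Phi \Po 'X^j).
Proof.
move=> cop_jn; have /(Pdiv.IdomainMonic.dvdpP (Cyclotomic_monic n)) [t Et] :=
  Cyclotomic_dvd_comp n_gt0 cop_jn.
exists (map_poly intr t); first exact: intpoly_over.
by rewrite /Phi -(map_polyXn intr) -map_comp_poly Et rmorphM mulrC.
Qed.

Lemma coprime_c : coprime c n.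
Proof.
by have /andP[] : coprime b n && coprime c n
  by rewrite -coprimeMl -coprime_modl bc1 coprime_modl coprime1n.
Qed.

Lemma Phi_dvdo_comp_Xc r : r \in P -> dvdo ('X^n - 1) (r - 'X^c) -> dvdo Phi (Phi \Po r).
Proof.
move=> Pr Ar; rewrite -(subrK (Phi \Po 'X^c) (Phi \Po r)); apply: dvdoD.
  apply: dvdo_trans (dvdo_trans Phi_dvdo_Xn_sub1 Ar) _.
  by apply: dvdo_compB; rewrite ?intpoly_over ?polyOverXn.
exact: Phi_dvdo_comp coprime_c.
Qed.

Lemma frob_ideal_modPhi k p : coprime b n ->
  dvdo (Phi ^+ k) p -> dvdo (Phi ^+ k) (p \Po 'X^b).
Proof.
move=> cop_bn Dp; have := dvdo_comp Dp (polyOverXn S b); rewrite rmorphXn /=.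
by apply: dvdo_trans; apply: dvdoX; apply: Phi_dvdo_comp.
Qed.

(* F_b is injective modulo Phi^k. With r(q^b) = q modulo (q^n - 1)^(k+1) we have
   r^b = q, so p = p(r^b) = (p(q^b))(r), and Phi^k | Phi(r)^k | (p(q^b))(r). *)
Lemma frob_inj_modPhi k p : p \in P -> dvdo (Phi ^+ k) (p \Po 'X^b) -> dvdo (Phi ^+ k) p.
Proof.
move=> Pp Dpb.
have [r Pr Ar] := frob_inverse_modApow bc1 b_unit binv_S k.+1.
have Ark : dvdo (('X^n - 1) ^+ k) (r \Po 'X^b - 'X).
  by apply: dvdo_trans Ar; apply: dvdo_exp2l; rewrite ?A_over.
have Ar1 : dvdo ('X^n - 1) (r \Po 'X^b - 'X).
  by rewrite -['X^n - 1]expr1; apply: dvdo_trans Ar; apply: dvdo_exp2l; rewrite ?A_over.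
rewrite -[p](subrK ((p \Po 'X^b) \Po r)); apply: dvdoD.
  apply: dvdo_trans (dvdoX k Phi_dvdo_Xn_sub1) _.
  rewrite -comp_polyA comp_Xn_poly -{1}(comp_polyXr p) -opprB; apply: dvdoN.
  apply: dvdo_trans (frob_inverse_pow n_gt0 bc1 b_unit binv_S Pr Ark) _.
  by apply: dvdo_compB; rewrite ?rpredX ?polyOverX.
have PhiXc := Phi_dvdo_comp_Xc Pr (frob_inverse_modA bc1 Pr Ar1).
have := dvdo_comp Dpb Pr; rewrite rmorphXn /=; apply: dvdo_trans.
exact: dvdoX.
Qed.

Lemma frob_surj_modPhi k p : p \in P ->
  exists2 r, r \in P & dvdo (Phi ^+ k) ((r \Po 'X^b) - p).
Proof.
move=> Pp; have [r Pr Ar] := frob_inverse_modApow bc1 b_unit binv_S k.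
exists (p \Po r); first exact: polyOver_comp.
rewrite -comp_polyA -{2}(comp_polyXr p).
apply: dvdo_trans (dvdoX k Phi_dvdo_Xn_sub1) _; apply: dvdo_trans Ar _.
by apply: dvdo_compB; rewrite ?polyOverX ?polyOver_comp ?polyOverXn.
Qed.
End FrobeniusModuloCyclotomic.

Definition zinvb (b : nat) : {pred rat} := fun x => excluded_middle_informative (Zinvb b x).

Lemma zinvbP b x : reflect (Zinvb b x) (x \in zinvb b).
Proof. exact: sumboolP. Qed.

(* Every element of Z[1/b] is some z / b^m with a nonzero denominator
   (for b = 0 the only elements are the integers). *)
Lemma Zinvb_nz b x :
  Zinvb b x -> exists z m, x = z%:~R / (b ^ m)%:R /\ (b ^ m)%:R != 0 :> rat.
Proof.
case=> z [m ->]; case: b => [|b].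
  case: m => [|m]; first by exists z, 0%N.
  by exists 0, 0%N; rewrite exp0n // invr0 mulr0 mul0r expn0.
by exists z, m; rewrite pnatr_eq0 expn_eq0.
Qed.

Lemma zinvb_subring b : subring_closed (zinvb b).
Proof.
split; first by apply/zinvbP; exists 1, 0%N; rewrite divr1.
  move=> x y /zinvbP/Zinvb_nz [z1 [m1 [-> nz1]]] /zinvbP/Zinvb_nz [z2 [m2 [-> nz2]]].
  apply/zinvbP; exists (z1 * (b ^ m2)%:Z - z2 * (b ^ m1)%:Z), (m1 + m2)%N.
  rewrite expnD natrM rmorphB !rmorphM /= !pmulrn; field.
  by rewrite nz1 nz2.
move=> x y /zinvbP [z1 [m1 ->]] /zinvbP [z2 [m2 ->]].
apply/zinvbP; exists (z1 * z2), (m1 + m2)%N.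
by rewrite expnD natrM rmorphM /= invfM mulrACA.
Qed.

HB.instance Definition _ (b : nat) :=
  GRing.isSubringClosed.Build rat (zinvb b) (zinvb_subring b).

Lemma binv_zinvb b : (b%:R : rat)^-1 \in zinvb b.
Proof. by apply/zinvbP; exists 1, 1%N; rewrite expn1 div1r. Qed.

Lemma polyZinvbE b p : polyZinvb b p <-> p \in polyOver (zinvb b).
Proof. by split=> [Pp | /polyOverP Pp i]; [apply/polyOverP => i | ]; apply/zinvbP. Qed.

Lemma in_cyc_idealE b n k p :
  in_cyc_ideal b n k p <-> dvd_over (zinvb b) (PhiQ n ^+ k) p.
Proof.
split=> [[r [/polyZinvbE Pr ->]] | [r Pr ->]]; first by exists r.
by exists r; split=> //; apply/polyZinvbE.
Qed.

Theorem proposition12 (b n k : nat) :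
  (0 < b)%N -> (0 < n)%N -> coprime n b ->
  [/\ (* F_b maps Z[1/b][q] into itself (it is a ring endomorphism q |-> q^b) *)
      (forall p, polyZinvb b p -> polyZinvb b (frob b p)),
      (* well-defined on the quotient: preserves the ideal (Phi_n^k) *)
      (forall p, polyZinvb b p -> in_cyc_ideal b n k p ->
                 in_cyc_ideal b n k (frob b p)),
      (* injective on the quotient *)
      (forall p, polyZinvb b p -> in_cyc_ideal b n k (frob b p) ->
                 in_cyc_ideal b n k p)
    & (* surjective on the quotient *)
      (forall p, polyZinvb b p ->
         exists r, polyZinvb b r /\ in_cyc_ideal b n k (frob b r - p))].
Proof.
move=> b_gt0 n_gt0 cop_nb; have cop_bn : coprime b n by rewrite coprime_sym.
(* c = b^(phi(n) - 1) is an inverse of b modulo n, by Euler's theorem. *)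
have bc1 : (b * b ^ (totient n).-1 = 1 %[mod n])%N.
  by rewrite -expnS prednK ?totient_gt0 // Euler_exp_totient.
have b_unit : (b%:R : rat) \is a GRing.unit by rewrite unitfE pnatr_eq0 -lt0n.
have binv := binv_zinvb b.
split=> p /polyZinvbE Pp.
- by apply/polyZinvbE; rewrite /frob polyOver_comp ?polyOverXn.
- by move/in_cyc_idealE/(frob_ideal_modPhi n_gt0 cop_bn)/in_cyc_idealE.
- by move/in_cyc_idealE/(frob_inj_modPhi n_gt0 bc1 b_unit binv Pp)/in_cyc_idealE.
- have [r Pr Dr] := frob_surj_modPhi n_gt0 bc1 b_unit binv k Pp.
  by exists r; split; [apply/polyZinvbE | apply/in_cyc_idealE].
Qed.
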